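(* Let $u$ be a word of length $n\ge1$. If $\mathrm{per}(u)<n$ then $\mathrm{lseedmax}(u)=n-1$; otherwise $\mathrm{lseedmax}(u)=0$.
   Context: For a nonempty word $x$, $\mathrm{per}(x)$ is the smallest positive integer $p$ with $x_i=x_{i+p}$ for all $1\le i\le|x|-p$. A word $s$ covers $w$ if every position of $w$ lies in some occurrence of $s$ in $w$. A seed of $u$ is a factor $s$ of $u$ such that $u$ is a factor of some word covered by $s$; a left seed is a seed that is a prefix of $u$. $\mathrm{lseedmax}(u)$ is the length of the longest left seed of $u$ that is shorter than $u$, or $0$ if there is none. *)

From mathcomp Require Import all_boot.
From mathcomp Require Import boolp.
Set Implicit Arguments. Unset Strict Implicit. Unset Printing Implicit Defensive.

Section Words.
Variable T : eqType.
Implicit Types x s u w : seq T.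

Definition is_period x (p : nat) : bool :=
  (0 < p) && all (fun i => onth x i == onth x (i + p)) (iota 0 (size x - p)).

(* per x = smallest positive period (searching p = 1 .. |x|; |x| is always a
   period, so for nonempty x this is the true minimum). *)
Definition per x : nat := (find (is_period x) (iota 1 (size x))).+1.

Definition occurs_at s w (i : nat) : Prop :=
  i + size s <= size w /\ take (size s) (drop i w) = s.

Definition covers s w : Prop :=
  forall j, j < size w -> exists i, occurs_at s w i /\ i <= j < i + size s.

Definition is_seed s u : Prop :=
  infix s u /\ exists w, covers s w /\ infix u w.

Definition is_left_seed s u : Prop := is_seed s u /\ prefix s u.

(* length of the longest left seed of u shorter than u, or 0 if none;
   a left seed of length k is necessarily take k u *)
Definition lseedmax u : nat :=
  \max_(k < size u | `[< is_left_seed (take k u) u >]) k.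

End Words.

From mathcomp Require Import all_boot.
From mathcomp Require Import boolp.
From mathcomp Require Import zify.

Set Implicit Arguments.
Unset Strict Implicit.
Unset Printing Implicit Defensive.

(* If [p < |u|] is a period of [u], the word [u[0,p) u[0,n-1)] is covered by
   the prefix of length [n - 1] (occurrences at [0] and [p]) and starts with
   [u]. Conversely, if a proper prefix [s] of [u] is a seed, look at the
   occurrence of [s] covering the last letter of [u] inside a covered
   superword: it starts strictly after [u] does and overlaps its end, so its
   offset with respect to [u] is a period smaller than [|u|]. *)

Section Periods.
Variable T : eqType.
Implicit Types u : seq T.

Lemma onth_drop u p i : onth (drop p u) i = onth u (p + i).
Proof. by rewrite !onthE map_drop nth_drop. Qed.

Lemma onth_take u m i : onth (take m u) i = if i < m then onth u i else None.
Proof.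
rewrite !onthE map_take; case: ltnP => hi; first by rewrite nth_take.
by rewrite nth_default // size_take_min; lia.
Qed.

Lemma is_periodE u p : 0 < p -> is_period u p = (drop p u == take (size u - p) u).
Proof.
rewrite /is_period => -> /=; apply/allP/eqP => [periodic | shift].
  apply: eq_from_onth => i; rewrite onth_drop onth_take.
  case: ltnP => hi; last by rewrite onth_default //; lia.
  by rewrite addnC; apply/esym/eqP/periodic; rewrite mem_iota.
move=> i; rewrite mem_iota add0n => /andP[_ hi].
by rewrite addnC -onth_drop shift onth_take hi.
Qed.

Lemma take_period u p m : is_period u p -> 0 < p <= m -> m <= size u ->
  take m u = take p u ++ take (m - p) u.
Proof.
move=> + /andP[p0 pm] mu; rewrite is_periodE // => /eqP shift.
by rewrite -{1}(subnKC pm) takeD shift take_takel //; lia.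
Qed.

Lemma per_ltP u :
  reflect (exists2 p, 0 < p < size u & is_period u p) (per u < size u).
Proof.
rewrite /per; apply: (iffP idP) => [lt_per | [p /andP[p0 pu] per_p]].
  have has_per : has (is_period u) (iota 1 (size u)).
    by rewrite has_find size_iota; lia.
  exists (find (is_period u) (iota 1 (size u))).+1; first by apply/andP; lia.
  have lt_find : find (is_period u) (iota 1 (size u)) < size u.
    by rewrite -[X in _ < X](size_iota 1) -has_find.
  by have := nth_find 0 has_per; rewrite nth_iota ?add1n.
case: (ltnP (find (is_period u) (iota 1 (size u))) p) => [|hp]; first lia.
have before : p.-1 < find (is_period u) (iota 1 (size u)) by lia.
have := before_find 0 before; rewrite nth_iota; last lia.
by rewrite add1n prednK ?per_p.
Qed.

End Periods.

Section Seeds.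
Variable T : eqType.
Implicit Types u s x : seq T.

Lemma covers_overlap s x : prefix s (x ++ s) -> size x <= size s ->
  covers s (x ++ s).
Proof.
rewrite prefixE => /eqP pre xs j; rewrite size_cat => hj.
case: (ltnP j (size s)) => hjs.
  by exists 0; split; [split; rewrite ?drop0 ?size_cat //; lia | lia].
exists (size x); split; last lia.
by split; [rewrite size_cat | rewrite drop_size_cat ?take_size].
Qed.

Lemma period_left_seed u p k : is_period u p -> 0 < p <= k ->
  k <= size u <= p + k -> is_left_seed (take k u) u.
Proof.
move=> per_p /andP[p0 pk] /andP[ku uk].
have sz_pu : size (take p u) = p by rewrite size_take_min; lia.
have sz_ku : size (take k u) = k by rewrite size_take_min; lia.
set w := take p u ++ take k u.
have take_w m : p <= m <= size u -> m <= p + k -> take m w = take m u.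
  move=> /andP[pm mu] mpk.
  rewrite (take_period per_p) ?p0 // -{1}(subnKC pm) takeD take_size_cat //.
  by rewrite drop_size_cat // take_takel //; lia.
split; last exact: prefix_take.
split; first exact: infix_take.
exists w; split.
  apply: covers_overlap; rewrite ?sz_pu ?sz_ku // prefixE sz_ku -/w.
  by rewrite take_w ?pk ?ku ?leq_addl.
apply: prefixW; rewrite prefixE take_w ?take_size //; lia.
Qed.

Lemma left_seed_period u s : is_left_seed s u -> size s < size u ->
  exists2 d, 0 < d < size u & is_period u d.
Proof.
case=> [[_ [w [cov /infixP[x [y ew]]]]]]; rewrite prefixE => /eqP pre su.
have [i [[_ occ] /andP[i_le i_gt]]] : exists i,
    occurs_at s w i /\ i <= size x + (size u).-1 < i + size s.
  by apply: cov; rewrite ew !size_cat; lia.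
have xi : size x < i by lia.
exists (i - size x); first by apply/andP; lia.
rewrite is_periodE; last lia.
have drop_w : drop i w = drop (i - size x) u ++ y.
  rewrite ew -{1}(subnK (ltnW xi)) -drop_drop drop_size_cat // drop_cat ifT //; lia.
apply/eqP; rewrite -(take_size_cat y (size_drop _ _)) -drop_w.
have overlap : size u - (i - size x) <= size s by lia.
by rewrite -(take_takel _ overlap) occ -pre take_takel.
Qed.

End Seeds.

Theorem lemma3 (T : eqType) (u : seq T) (n : nat) :
  size u = n -> 1 <= n ->
  (per u < n -> lseedmax u = n - 1) /\ (~ (per u < n) -> lseedmax u = 0).
Proof.
move=> <- u0; split => [/per_ltP[p /andP[p0 pu] per_p] | no_period].
  have seed : is_left_seed (take (size u - 1) u) u.
    by apply: (period_left_seed per_p); lia.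
  apply/eqP; rewrite eqn_leq; apply/andP; split.
    by apply/bigmax_leqP => k _; have := ltn_ord k; lia.
  have lt_u : size u - 1 < size u by lia.
  exact: (leq_bigmax_cond (Ordinal lt_u) (asboolT seed)).
rewrite /lseedmax big_pred0 // => k; apply: asboolF => seed.
apply/no_period/per_ltP/(left_seed_period seed).
by rewrite size_take_min; have := ltn_ord k; lia.
Qed.
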